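(* Let $N\ge 1$ and let $w=(w_1,\dots,w_{2N})$ be an original sequence with $N$ crossings, and let $\mathcal{C}\subset\mathbb{R}^N$ be its set of charge vectors (see context). Suppose there exist pairwise distinct indices $I_1,\dots,I_M\in\{1,\dots,N\}$, $M\ge 1$, forming a cyclic sequence of adjacent pairs: for every $k=1,\dots,M$ (with $I_{M+1}:=I_1$), the entry $(+,I_k)$ and the entry $(-,I_{k+1})$ occupy two consecutive positions of $w$, in either order. Let $\xi=\sum_{I=1}^N c_I e_I$ with all $c_I>0$. Then $\xi$ does not lie in the cone (set of all nonnegative linear combinations) generated by $\mathcal{C}\setminus\{e_{I_1},\dots,e_{I_M}\}$. Equivalently, every subset $S\subseteq\mathcal{C}$ with $\xi\in\mathrm{Cone}(S)$ contains $e_{I_k}$ for at least one $k\in\{1,\dots,M\}$.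
   Context: An original sequence with $N$ crossings is a word $w=(w_1,\dots,w_{2N})$ with $w_p=(s_p,I_p)$, $s_p\in\{+,-\}$, $I_p\in\{1,\dots,N\}$, such that for every $I\in\{1,\dots,N\}$ there is exactly one position $p$ with $w_p=(+,I)$ and exactly one position $p$ with $w_p=(-,I)$. Such a sequence arises from a $(1,1)$-tangle diagram with $N$ crossings by traversing the tangle from its incoming end to its outgoing end and recording, at each crossing $I$ passed, $+$ if the strand passes over and $-$ if it passes under. Let $e_1,\dots,e_N$ be the standard basis of $\mathbb{R}^N$, and set $\epsilon(+)=1$, $\epsilon(-)=-1$. For each position $p$ define $P(p)=-\epsilon(s_p)\sum_{r\ge p}\epsilon(s_r)\,e_{I_r}$ and $\overline{P}(p)=-\epsilon(s_p)\sum_{r\le p}\epsilon(s_r)\,e_{I_r}$. The set of charge vectors is $\mathcal{C}=\{e_1,\dots,e_N\}\cup\{P(p),\overline{P}(p): 1\le p\le 2N\}$. For a finite set $S\subset\mathbb{R}^N$, $\mathrm{Cone}(S)$ denotes the set of nonnegative linear combinations of elements of $S$. *)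

From HB Require Import structures.
From mathcomp Require Import all_boot all_order all_algebra.
Set Implicit Arguments. Unset Strict Implicit. Unset Printing Implicit Defensive.
Import Order.TTheory GRing.Theory Num.Theory.
Local Open Scope ring_scope.

(* Signs are booleans: true = '+' (over), false = '-' (under).
   Positions 1..2N are represented by 'I_(2N) (0-based), crossings
   1..N by 'I_N (0-based). Vectors of R^N are row vectors 'rV[R]_N. *)

Definition original_sequence (N : nat) (w : 'I_(2 * N) -> bool * 'I_N) : Prop :=
  forall (s : bool) (I : 'I_N), #|[set p | w p == (s, I)]| = 1%N.

Definition eps {R : numDomainType} (s : bool) : R := if s then 1 else -1.

Definition ebasis {R : numDomainType} (N : nat) (I : 'I_N) : 'rV[R]_N :=
  delta_mx 0 I.

Definition chargeP {R : numDomainType} (N : nat) (w : 'I_(2 * N) -> bool * 'I_N)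
  (p : 'I_(2 * N)) : 'rV[R]_N :=
  - (eps (w p).1 *: \sum_(r : 'I_(2 * N) | (p <= r)%N) (eps (w r).1 *: ebasis (w r).2)).

Definition chargePbar {R : numDomainType} (N : nat) (w : 'I_(2 * N) -> bool * 'I_N)
  (p : 'I_(2 * N)) : 'rV[R]_N :=
  - (eps (w p).1 *: \sum_(r : 'I_(2 * N) | (r <= p)%N) (eps (w r).1 *: ebasis (w r).2)).

Definition charge_vectors {R : numDomainType} (N : nat) (w : 'I_(2 * N) -> bool * 'I_N)
  (v : 'rV[R]_N) : Prop :=
  (exists I : 'I_N, v = ebasis I) \/
  (exists p : 'I_(2 * N), v = chargeP w p \/ v = chargePbar w p).

Definition in_cone {R : numDomainType} (N : nat) (S : 'rV[R]_N -> Prop)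
  (x : 'rV[R]_N) : Prop :=
  exists (n : nat) (v : 'I_n -> 'rV[R]_N) (a : 'I_n -> R),
    (forall i, S (v i)) /\ (forall i, 0 <= a i) /\ x = \sum_(i < n) a i *: v i.

Definition adjacent_entries (N : nat) (w : 'I_(2 * N) -> bool * 'I_N)
  (x y : bool * 'I_N) : Prop :=
  exists (p q : 'I_(2 * N)), q = p.+1 :> nat /\
    ((w p = x /\ w q = y) \/ (w p = y /\ w q = x)).

From HB Require Import structures.
From mathcomp Require Import all_boot all_order all_algebra.
From mathcomp Require Import zify.
Import Order.TTheory GRing.Theory Num.Theory.
Set Implicit Arguments. Unset Strict Implicit.
Local Open Scope ring_scope.

(* The linear form u |-> sum_k u_(I_k) is positive on xi and nonpositive on
   every charge vector other than the e_(I_k), hence on their cone.  On P(p)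
   (likewise Pbar(p)) it equals -eps(s_p) sum_k ([(+,I_k) lies at or after p]
   - [(-,I_(k+1)) lies at or after p]), after shifting k in the negative terms.
   As (+,I_k) and (-,I_(k+1)) are adjacent, the k-th bracket vanishes unless p
   is one of these two positions, and then its sign is eps(s_p). *)

Definition adjacent_pos n (q1 q2 : 'I_n) : Prop :=
  q2 = q1.+1 :> nat \/ q1 = q2.+1 :> nat.

Definition cut_at n (p : 'I_n) (Q : pred 'I_n) : Prop :=
  Q =1 (fun r => p <= r)%N \/ Q =1 (fun r => r <= p)%N.

Lemma cut_at_adjacent n (p q1 q2 : 'I_n) (Q : pred 'I_n) :
  cut_at p Q -> adjacent_pos q1 q2 -> Q q1 -> ~~ Q q2 -> p = q1.
Proof.
by move=> [] HQ adj; rewrite !HQ -ltnNge => Hq1 Hq2;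
  apply/val_inj => /=; case: adj; lia.
Qed.

Section OriginalSequence.

Variables (N : nat) (w : 'I_(2 * N) -> bool * 'I_N).
Hypothesis w_orig : original_sequence w.

Lemma original_sequence_inj (q r : 'I_(2 * N)) : w r = w q -> r = q.
Proof.
move=> Ewr; have := w_orig (w q).1 (w q).2; rewrite -surjective_pairing.
move/eqP; rewrite eqn_leq => /andP[/card_le1_eqP Hle _].
by apply: Hle; rewrite inE ?Ewr.
Qed.

Lemma sum_entry_indicator (R : numDomainType) (Q : pred 'I_(2 * N)) q :
  \sum_(r | Q r) ((w r == w q)%:R : R) = (Q q)%:R.
Proof.
rewrite big_mkcond (bigD1 q) //= eqxx big1 ?addr0; first by case: (Q q).
move=> r /negbTE Hrq; case: (Q r) => //.
by case: eqP => // /original_sequence_inj Erq; rewrite Erq eqxx in Hrq.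
Qed.

Lemma eps_cut_adjacent_ge0 (R : numDomainType) p (Q : pred 'I_(2 * N)) q1 q2 :
  cut_at p Q -> adjacent_pos q1 q2 -> (w q1).1 -> ~~ (w q2).1 ->
  0 <= (eps (w p).1 : R) * ((Q q1)%:R - (Q q2)%:R).
Proof.
move=> Hcut adj s1 s2.
case Q1: (Q q1); case Q2: (Q q2); rewrite ?subrr ?mulr0 //.
- by rewrite (cut_at_adjacent Hcut adj) ?Q2 // s1 subr0 mulr1.
- have adj' : adjacent_pos q2 q1 by case: adj; [right | left].
  rewrite (cut_at_adjacent Hcut adj') ?Q1 //.
  by rewrite (negbTE s2) sub0r mulrNN mulr1.
Qed.

End OriginalSequence.

Section CycleWeight.

Variables (R : numDomainType) (N M : nat) (Ik : 'I_M -> 'I_N).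

Definition cycle_weight (u : 'rV[R]_N) : R := \sum_(k < M) u 0 (Ik k).

Lemma cycle_weight_lincomb n (a : 'I_n -> R) (v : 'I_n -> 'rV[R]_N) :
  cycle_weight (\sum_(i < n) a i *: v i) = \sum_(i < n) a i * cycle_weight (v i).
Proof.
rewrite /cycle_weight; under eq_bigr do rewrite summxE.
rewrite exchange_big; apply: eq_bigr => i _.
by rewrite mulr_sumr; apply: eq_bigr => k _; rewrite mxE.
Qed.

Lemma cycle_weight_oppZ a (u : 'rV[R]_N) :
  cycle_weight (- (a *: u)) = - (a * cycle_weight u).
Proof.
by rewrite /cycle_weight mulr_sumr -sumrN; apply: eq_bigr => k _; rewrite !mxE.
Qed.

Lemma cycle_weight_ebasis_notin J :
  (forall k, Ik k != J) -> cycle_weight (ebasis J) = 0.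
Proof.
by move=> HJ; apply: big1 => k _; rewrite mxE eqxx (negbTE (HJ k)).
Qed.

Lemma cycle_weight_diag_gt0 (c : 'I_N -> R) :
  (0 < M)%N -> (forall I, 0 < c I) ->
  0 < cycle_weight (\sum_(I < N) c I *: ebasis I).
Proof.
move=> HM Hc; have entry J : (\sum_(I < N) c I *: ebasis I) 0 J = c J.
  rewrite summxE (bigD1 J) //= big1 => [|I /negbTE HIJ].
    by rewrite !mxE !eqxx mulr1 addr0.
  by rewrite !mxE eqxx eq_sym HIJ mulr0.
rewrite /cycle_weight (bigD1 (Ordinal HM)) //= entry.
rewrite ltr_pwDl ?Hc //; apply: sumr_ge0 => k _.
by rewrite entry ltW.
Qed.

Lemma cycle_weight_cone_le0 (S : 'rV[R]_N -> Prop) x :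
  (forall v, S v -> cycle_weight v <= 0) -> in_cone S x -> cycle_weight x <= 0.
Proof.
move=> HS [n [v [a [Sv [a_ge0 ->]]]]]; rewrite cycle_weight_lincomb.
by apply: sumr_le0 => i _; rewrite mulr_ge0_le0 ?HS.
Qed.

Variable (w : 'I_(2 * N) -> bool * 'I_N).
Hypothesis w_orig : original_sequence w.
Hypothesis cycle_adjacent : forall k : 'I_M,
  adjacent_entries w (true, Ik k) (false, Ik (ordS k)).

Lemma cycle_weight_signed_sum (Q : pred 'I_(2 * N)) :
  cycle_weight (\sum_(r | Q r) eps (w r).1 *: ebasis (w r).2) =
  \sum_(k < M) (\sum_(r | Q r) ((w r == (true, Ik k))%:R
                               - (w r == (false, Ik k))%:R)).
Proof.
apply: eq_bigr => k _; rewrite summxE; apply: eq_bigr => r _.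
case: (w r) => [[] J]; rewrite !mxE eqxx /eps /= !xpair_eqE /=.
  by rewrite mul1r subr0 eq_sym.
by rewrite mulN1r sub0r eq_sym.
Qed.

Lemma eps_cycle_weight_cut_ge0 p (Q : pred 'I_(2 * N)) :
  cut_at p Q ->
  0 <= eps (w p).1 * cycle_weight (\sum_(r | Q r) eps (w r).1 *: ebasis (w r).2).
Proof.
move=> Hcut; rewrite cycle_weight_signed_sum.
under eq_bigr do rewrite sumrB.
rewrite sumrB [X in _ - X](reindex_inj (@ordS_inj M)) -sumrB mulr_sumr.
apply: sumr_ge0 => k _.
have [q1 [q2 [adj [[w1 w2] | [w2 w1]]]]] := cycle_adjacent k.
- rewrite -w1 -w2 !sum_entry_indicator //.
  by apply: (eps_cut_adjacent_ge0 _ Hcut); [left | rewrite w1 | rewrite w2].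
- rewrite -w1 -w2 !sum_entry_indicator //.
  by apply: (eps_cut_adjacent_ge0 _ Hcut); [right | rewrite w1 | rewrite w2].
Qed.

Lemma cycle_weight_charge_le0 v :
  charge_vectors w v -> (forall k, v <> ebasis (Ik k)) -> cycle_weight v <= 0.
Proof.
case=> [[J ->] | [p [-> | ->]]] Hv.
- rewrite cycle_weight_ebasis_notin // => k; apply/eqP => EJ.
  by apply: (Hv k); rewrite EJ.
- by rewrite cycle_weight_oppZ oppr_le0 eps_cycle_weight_cut_ge0 //; left.
- by rewrite cycle_weight_oppZ oppr_le0 eps_cycle_weight_cut_ge0 //; right.
Qed.

End CycleWeight.

Theorem proposition3p1 (R : realFieldType) (N : nat)
  (w : 'I_(2 * N) -> bool * 'I_N) (M : nat) (Ik : 'I_M -> 'I_N)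
  (c : 'I_N -> R) :
  (1 <= N)%N ->
  original_sequence w ->
  (1 <= M)%N ->
  injective Ik ->
  (forall k k' : 'I_M, val k' = (k.+1 %% M)%N ->
     adjacent_entries w (true, Ik k) (false, Ik k')) ->
  (forall I, 0 < c I) ->
  ~ in_cone (fun v : 'rV[R]_N =>
               charge_vectors w v /\ (forall k : 'I_M, v <> ebasis (Ik k)))
            (\sum_(I < N) c I *: ebasis I).
Proof.
move=> _ w_orig M_gt0 _ cycle_adjacent c_gt0 xi_in_cone.
have cycle_adjacent_ordS k := cycle_adjacent k (ordS k) erefl.
have : cycle_weight Ik (\sum_(I < N) c I *: ebasis I) <= 0.
  apply: cycle_weight_cone_le0 xi_in_cone => v [v_charge v_notin].
  exact: cycle_weight_charge_le0 w_orig cycle_adjacent_ordS _ v_charge v_notin.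
by rewrite leNgt cycle_weight_diag_gt0.
Qed.
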